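(* Let $p\ge 2$ and let $\Theta$ be a $p\times p$ correlation matrix (real symmetric positive semi-definite with unit diagonal). For $\alpha\in(0,\infty)^p$ define the $p\times p$ matrix $g(\Theta,\alpha)$ by $g_{ij}(\Theta,\alpha)=\Theta_{ij}\alpha_i\alpha_j$ for $i\neq j$ and $g_{ii}(\Theta,\alpha)=1$. Let $e^{(1)},\dots,e^{(p)}$ be the standard basis vectors of $\mathbb{R}^p$, let $\tilde m$ be the number of pairs $1\le i<j\le p$ with $\Theta_{ij}\neq 0$, and let $A$ be the $\tilde m\times p$ matrix whose rows are the vectors $e^{(i)}+e^{(j)}$ (as row vectors), one for each pair $i<j$ with $\Theta_{ij}\neq 0$. If $A$ has rank $p$, then the model is identifiable at $\Theta$: for any $\alpha,\beta\in(0,\infty)^p$ and any $p\times p$ correlation matrix $\Theta'$, if $\Theta'=\Theta$ and $g(\Theta',\beta)=g(\Theta,\alpha)$, then $\alpha=\beta$. Equivalently, the map $(\Theta,\alpha)\mapsto(\Theta,g(\Theta,\alpha))$ is injective in $\alpha\in(0,\infty)^p$ for every such $\Theta$.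
   Context: In the two-population model, one population of correlation matrices has expected value $\Theta$ and the other has expected value $g(\Theta,\alpha)$ (the multiplicative link function); identifiability means the pair of expected values $(\Theta, g(\Theta,\alpha))$ determines $(\Theta,\alpha)$. *)

From mathcomp Require Import all_boot all_order all_algebra.
Set Implicit Arguments. Unset Strict Implicit. Unset Printing Implicit Defensive.
Import Order.TTheory GRing.Theory Num.Theory.
Local Open Scope ring_scope.

Definition is_correlation (R : realFieldType) (p : nat) (T : 'M[R]_p) : Prop :=
  [/\ T^T = T,
      (forall v : 'cV[R]_p, 0 <= (v^T *m T *m v) 0 0)
    & (forall i : 'I_p, T i i = 1)].

Definition link_g (R : realFieldType) (p : nat) (T : 'M[R]_p) (a : 'rV[R]_p)
  : 'M[R]_p :=
  \matrix_(i, j) (if i == j then 1 else T i j * a 0 i * a 0 j).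

Definition nz_pairs (R : realFieldType) (p : nat) (T : 'M[R]_p)
  : {set 'I_p * 'I_p} :=
  [set ij : 'I_p * 'I_p | (ij.1 < ij.2)%N && (T ij.1 ij.2 != 0)].

Definition pair_matrix (R : realFieldType) (p : nat) (T : 'M[R]_p)
  : 'M[R]_(#|nz_pairs T|, p) :=
  \matrix_(k, l) (((enum_val k).1 == l)%:R + ((enum_val k).2 == l)%:R).

(* Where Theta_ij <> 0 the link forces alpha_i alpha_j = beta_i beta_j, so
   alpha_i - beta_i and alpha_j - beta_j have opposite signs.  Hence the sign
   vector of alpha - beta lies in the kernel of the pair matrix A, which is
   trivial because A has full column rank. *)
From mathcomp Require Import all_boot all_order all_algebra.
From mathcomp Require Import ring.
Import Order.TTheory GRing.Theory Num.Theory.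
Local Open Scope ring_scope.

Lemma sgrB_add_eq0 (R : realDomainType) (a1 a2 b1 b2 : R) :
  0 < a2 -> 0 < b1 -> b1 * b2 = a1 * a2 ->
  Num.sg (a1 - b1) + Num.sg (a2 - b2) = 0.
Proof.
move=> a2_gt0 b1_gt0 e.
have : (a1 - b1) * a2 = - ((a2 - b2) * b1).
  by rewrite mulrBl -e; ring.
move/(congr1 Num.sg).
rewrite sgrN !sgrM (gtr0_sg a2_gt0) (gtr0_sg b1_gt0) !mulr1 => ->.
exact: addNr.
Qed.

Lemma link_g_offdiag_eq {R : realFieldType} {p : nat} {T : 'M[R]_p}
    {a b : 'rV[R]_p} {i j : 'I_p} :
  link_g T b = link_g T a -> i != j -> T i j != 0 ->
  b 0 i * b 0 j = a 0 i * a 0 j.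
Proof.
move=> eg /negbTE ne_ij nz_ij; apply: (mulfI nz_ij).
by have := congr1 (fun M : 'M_p => M i j) eg; rewrite !mxE ne_ij !mulrA.
Qed.

Lemma mem_nz_pairs {R : realFieldType} {p : nat} {T : 'M[R]_p} {ij : 'I_p * 'I_p} :
  ij \in nz_pairs T -> ij.1 != ij.2 /\ T ij.1 ij.2 != 0.
Proof. by rewrite inE neq_ltn => /andP [-> ->]. Qed.

Lemma mul_tr_pair_matrix (R : realFieldType) (p : nat) (T : 'M[R]_p)
    (v : 'rV[R]_p) (k : 'I_#|nz_pairs T|) :
  (v *m (pair_matrix T)^T) 0 k = v 0 (enum_val k).1 + v 0 (enum_val k).2.
Proof.
have [ne12 _] := mem_nz_pairs (enum_valP k).
rewrite !mxE; under eq_bigr => l _ do rewrite !mxE mulrDr.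
rewrite big_split /= (bigD1 (enum_val k).1) //= big1 => [|l /negbTE nl]; last first.
  by rewrite eq_sym nl mulr0.
rewrite (bigD1 (enum_val k).2) //= big1 => [|l /negbTE nl]; last first.
  by rewrite eq_sym nl mulr0.
by rewrite !eqxx !mulr1 !addr0.
Qed.

Theorem mainTheorem2 (R : realFieldType) (p : nat) (Theta : 'M[R]_p) :
  (2 <= p)%N ->
  is_correlation Theta ->
  \rank (pair_matrix Theta) = p ->
  forall (alpha beta : 'rV[R]_p) (Theta' : 'M[R]_p),
    (forall i, 0 < alpha 0 i) -> (forall i, 0 < beta 0 i) ->
    is_correlation Theta' ->
    Theta' = Theta ->
    link_g Theta' beta = link_g Theta alpha ->
    alpha = beta.
Proof.
move=> _ _ rkA alpha beta Theta' alpha_gt0 beta_gt0 _ -> eg.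
pose v : 'rV[R]_p := \row_i Num.sg (alpha 0 i - beta 0 i).
have freeAT : row_free (pair_matrix Theta)^T by rewrite /row_free mxrank_tr rkA.
have vAT0 : v *m (pair_matrix Theta)^T = 0.
  apply/rowP => k; rewrite mul_tr_pair_matrix !mxE.
  have [ne12 nz12] := mem_nz_pairs (enum_valP k).
  exact: sgrB_add_eq0 (alpha_gt0 _) (beta_gt0 _) (link_g_offdiag_eq eg ne12 nz12).
have /eqP v0 : v == 0 by rewrite -(mulmx_free_eq0 _ freeAT) vAT0.
apply/rowP => i; move/rowP/(_ i): v0; rewrite !mxE => /eqP.
by rewrite sgr_eq0 subr_eq0 => /eqP.
Qed.
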